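(* Let $x,\tilde x\in(-\infty,0)$ and $y\in(x,0)$, and set $\Delta\vartheta=p_{0,-\infty}(\tilde x)-p_{0,-\infty}(x)$. Then $$p_{\tilde x,0}\Big(p_{\tilde x,1}^{-1}\big(p_{x,1}(y)+\Delta\vartheta\big)\Big)-p_{x,0}(y)=p_{1,-\infty}(\tilde x)-p_{1,-\infty}(x).$$
   Context: For real $p\neq q$ and $w$ strictly between $p$ and $q$ (oriented interval $(p,q)$, $p>q$ allowed), $p_{p,q}(w)=\ln\frac{w-p}{q-w}$, a bijection onto $\mathbb{R}$ with inverse $p_{p,q}^{-1}$; also $p_{p,-\infty}(w)=\ln|w-p|$ for $w<p$. *)

From Stdlib Require Import Reals.
Open Scope R_scope.

(* p_{p,q}(w) = ln((w-p)/(q-w)), for w strictly between p and q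
   (oriented interval, p > q allowed). *)
Definition pcoord (p q w : R) : R := ln ((w - p) / (q - w)).

(* The inverse p_{p,q}^{-1} : R -> (p,q), obtained by solving
   (w-p)/(q-w) = exp t, i.e. w = (p + exp t * q) / (1 + exp t). *)
Definition pcoord_inv (p q t : R) : R := (p + exp t * q) / (1 + exp t).

Definition pcoord_minf (p w : R) : R := ln (Rabs (w - p)).

(* Let r0 and r1 be the ratios under the logarithm in [pcoord p 0 w] and
   [pcoord p 1 w].  They satisfy the cross-ratio relation
   [-p / r1 - (1 - p) / r0 = 1].  Adding [dtheta] multiplies r1 by [-xt / -x],
   so [w := pcoord_inv xt 1 (pcoord x 1 y + dtheta)] has the same value of
   [-p / r1] at [p = xt] as [y] has at [p = x]; hence the same value of
   [(1 - p) / r0], and taking logarithms gives the claim. *)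

From Stdlib Require Import Reals Lra.
Open Scope R_scope.

Definition pratio (p q w : R) : R := (w - p) / (q - w).

Lemma pcoord_pratio (p q w : R) : pcoord p q w = ln (pratio p q w).
Proof. reflexivity. Qed.

Lemma pcoord_minf_lt (p w : R) : w < p -> pcoord_minf p w = ln (p - w).
Proof.
  intros Hw. unfold pcoord_minf. rewrite Rabs_left by lra. f_equal. ring.
Qed.

Lemma ln_mult_div (a b c : R) :
  0 < a -> 0 < b -> 0 < c -> ln (a * b / c) = ln a + ln b - ln c.
Proof.
  intros Ha Hb Hc. unfold Rdiv.
  rewrite ln_mult, ln_mult, ln_Rinv; try lra;
    auto using Rinv_0_lt_compat, Rmult_lt_0_compat.
Qed.

Lemma pratio_pos (p q w : R) : p < w < q -> 0 < pratio p q w.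
Proof. intros Hw. unfold pratio. apply Rdiv_lt_0_compat; lra. Qed.

Lemma pcoord_inv_between (p q t : R) :
  p < q -> p < pcoord_inv p q t < q.
Proof.
  intros Hpq. unfold pcoord_inv. pose proof (exp_pos t) as He.
  split; apply (Rmult_lt_reg_r (1 + exp t)); try lra;
    unfold Rdiv; rewrite Rmult_assoc, Rinv_l; nra.
Qed.

Lemma pratio_pcoord_inv (p q t : R) :
  p <> q -> pratio p q (pcoord_inv p q t) = exp t.
Proof.
  intros Hpq. unfold pratio, pcoord_inv. pose proof (exp_pos t).
  field. split; [lra|].
  replace (q * (1 + exp t) - (p + exp t * q)) with (q - p) by ring. lra.
Qed.

Lemma pratio_0_of_pratio_1 (p w : R) :
  p <> 1 -> w <> p -> w <> 0 -> w <> 1 ->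
  pratio p 0 w = (1 - p) / (- p / pratio p 1 w - 1).
Proof.
  intros Hp Hwp Hw0 Hw1. unfold pratio.
  replace (- p / ((w - p) / (1 - w)) - 1) with ((p - 1) * w / (w - p))
    by (field; lra).
  field; repeat split; lra.
Qed.

Lemma pratio_1_lt_opp_iff (p w : R) :
  p < 0 -> w < 1 -> (pratio p 1 w < - p <-> w < 0).
Proof.
  intros Hp Hw.
  assert (Hr : pratio p 1 w * (1 - w) = w - p) by (unfold pratio; field; lra).
  split; intros H; nra.
Qed.

Theorem proposition2p3 (x xt y : R) :
  x < 0 -> xt < 0 -> x < y -> y < 0 ->
  let dtheta := pcoord_minf 0 xt - pcoord_minf 0 x in
  pcoord xt 0 (pcoord_inv xt 1 (pcoord x 1 y + dtheta)) - pcoord x 0 y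
  = pcoord_minf 1 xt - pcoord_minf 1 x.
Proof.
  intros Hx Hxt Hxy Hy dtheta.
  unfold dtheta. rewrite !pcoord_minf_lt, !Rminus_0_l by lra.
  rewrite !pcoord_pratio.
  set (w := pcoord_inv xt 1 _).
  assert (Hw : xt < w < 1) by (apply pcoord_inv_between; lra).
  assert (Hr1y : 0 < pratio x 1 y) by (apply pratio_pos; lra).
  assert (Hr1w : pratio xt 1 w = pratio x 1 y * - xt / - x).
  { assert (0 < pratio x 1 y * - xt / - x)
      by (apply Rdiv_lt_0_compat; [apply Rmult_lt_0_compat|]; lra).
    unfold w. rewrite pratio_pcoord_inv by lra.
    rewrite Rplus_minus_assoc, <- ln_mult_div, exp_ln by lra. reflexivity. }
  assert (Hshift : - xt / pratio xt 1 w = - x / pratio x 1 y)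
    by (rewrite Hr1w; field; lra).
  assert (Hr1y_lt : pratio x 1 y < - x) by (apply pratio_1_lt_opp_iff; lra).
  assert (Hw0 : w < 0).
  { apply (pratio_1_lt_opp_iff xt w); try lra.
    rewrite Hr1w. apply (Rmult_lt_reg_r (- x)); [lra|].
    unfold Rdiv. rewrite Rmult_assoc, Rinv_l; nra. }
  assert (Hr0 : pratio xt 0 w = pratio x 0 y * (1 - xt) / (1 - x)).
  { rewrite !pratio_0_of_pratio_1, Hshift by lra.
    field; repeat split; lra. }
  rewrite Hr0, ln_mult_div; [ring | apply pratio_pos | |]; lra.
Qed.
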